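(* Let $\rho=\frac12(I+x\sigma_1+y\sigma_2+z\sigma_3)$ with $(x,y,z)\in\mathbb R^3$ and $r:=\sqrt{x^2+y^2+z^2}\in[0,1)$, let $A\in M_2(\mathbb C)$ be self-adjoint and $f\in\mathcal F^{\,r}_{op}$. Let $\varphi_1,\varphi_2$ be an orthonormal basis of eigenvectors of $\rho$ with $\rho\varphi_1=\frac{1-r}{2}\varphi_1$, $\rho\varphi_2=\frac{1+r}{2}\varphi_2$, let $A_0=A-\mathrm{Tr}(\rho A)I$ and $a_{12}=\langle A_0\varphi_1,\varphi_2\rangle$. Then $$I^f_\rho(A)=\big[1-m_{\tilde f}(1-r,1+r)\big]\,|a_{12}|^2.$$
   Context: $\sigma_1=\begin{pmatrix}0&1\\1&0\end{pmatrix}$, $\sigma_2=\begin{pmatrix}0&-i\\i&0\end{pmatrix}$, $\sigma_3=\begin{pmatrix}1&0\\0&-1\end{pmatrix}$ are the Pauli matrices. $\mathcal F_{op}$ is the class of functions $f:(0,\infty)\to(0,\infty)$ that are operator monotone, satisfy $f(1)=1$ and $tf(t^{-1})=f(t)$ for all $t>0$. $f(0):=\lim_{x\to0^+}f(x)$, and $\mathcal F^{\,r}_{op}=\{f\in\mathcal F_{op}: f(0)\neq0\}$. For $f\in\mathcal F^{\,r}_{op}$, $\tilde f(x):=\frac12\big[(x+1)-(x-1)^2\frac{f(0)}{f(x)}\big]$ for $x>0$. For $g\in\mathcal F_{op}$ and $x,y>0$, $m_g(x,y)=xg(y/x)$. $L_\rho(X)=\rho X$, $R_\rho(X)=X\rho$,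 and $m_f(L_\rho,R_\rho)$ multiplies the entry $X_{ij}$ of $X$ (in an orthonormal eigenbasis of $\rho$ with eigenvalues $\lambda_i$) by $m_f(\lambda_i,\lambda_j)$. $\|X\|^2_{\rho,f}=\mathrm{Tr}\big(X^* m_f(L_\rho,R_\rho)^{-1}(X)\big)$. The $f$-information is $I^f_\rho(A)=\frac{f(0)}{2}\|i[\rho,A]\|^2_{\rho,f}$. *)

From HB Require Import structures.
From mathcomp Require Import all_boot all_order all_algebra.
From mathcomp Require Import complex.
From mathcomp Require Import all_classical all_reals all_analysis.

Set Implicit Arguments.
Unset Strict Implicit.
Unset Printing Implicit Defensive.

Import Order.TTheory GRing.Theory Num.Theory.
Local Open Scope ring_scope.

Definition RC {R : realType} (t : R) : R[i] := (t%:C)%C.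

Definition adj {R : realType} m n (M : 'M[R[i]]_(m, n)) : 'M[R[i]]_(n, m) :=
  (map_mx Num.conj M)^T.

Definition psdmx {R : realType} n (M : 'M[R[i]]_n) : Prop :=
  forall v : 'cV[R[i]]_n, 0 <= (adj v *m M *m v) 0 0.

Definition loewner_le {R : realType} n (A B : 'M[R[i]]_n) : Prop :=
  psdmx (B - A).

Definition unitary {R : realType} n (U : 'M[R[i]]_n) : Prop :=
  U *m adj U = 1%:M.

(* The positive definite matrix U^* diag(a) U (U unitary, a_i > 0) and the
   functional calculus f(U^* diag(a) U) = U^* diag(f a) U. *)
Definition spec_mx {R : realType} n (U : 'M[R[i]]_n) (a : 'rV[R]_n) :=
  adj U *m diag_mx (map_mx RC a) *m U.

(* Every positive definite matrix is of
   the form U^* diag(a) U with U unitary and a > 0. *)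
Definition operator_monotone {R : realType} (f : R -> R) : Prop :=
  forall n (U V : 'M[R[i]]_n) (a b : 'rV[R]_n),
    unitary U -> unitary V ->
    (forall j, 0 < a 0 j) -> (forall j, 0 < b 0 j) ->
    loewner_le (spec_mx U a) (spec_mx V b) ->
    loewner_le (spec_mx U (map_mx f a)) (spec_mx V (map_mx f b)).

(* the class F_op (f is only relevant on (0,oo)) *)
Definition Fop {R : realType} (f : R -> R) : Prop :=
  [/\ operator_monotone f,
      (forall t, 0 < t -> 0 < f t),
      f 1 = 1 &
      (forall t, 0 < t -> t * f t^-1 = f t)].

Definition mean {R : realType} (g : R -> R) (x y : R) : R := x * g (y / x).

Definition ftilde {R : realType} (f : R -> R) (f0 : R) (x : R) : R :=
  2^-1 * ((x + 1) - (x - 1) ^+ 2 * f0 / f x).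

Definition mx2 {R : realType} (a b c d : R[i]) : 'M[R[i]]_2 :=
  \matrix_(i < 2, j < 2)
    if (i == 0 :> nat) then (if (j == 0 :> nat) then a else b)
    else (if (j == 0 :> nat) then c else d).

Definition sigma1 {R : realType} : 'M[R[i]]_2 := mx2 0 1 1 0.
Definition sigma2 {R : realType} : 'M[R[i]]_2 := mx2 0 (- 'i%C) 'i%C 0.
Definition sigma3 {R : realType} : 'M[R[i]]_2 := mx2 1 0 0 (-1).

Definition qubit {R : realType} (x y z : R) : 'M[R[i]]_2 :=
  RC (2^-1) *: (1%:M + RC x *: sigma1 + RC y *: sigma2 + RC z *: sigma3).

(* m_f(L_rho, R_rho)^{-1}(X), computed in the orthonormal eigenbasis of rho
   given by the columns of U, with corresponding eigenvalues lam:
   the (i,j) entry of X in that basis is divided by m_f(lam_i, lam_j). *)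
Definition mf_inv {R : realType} n (f : R -> R) (U : 'M[R[i]]_n)
    (lam : 'rV[R]_n) (X : 'M[R[i]]_n) : 'M[R[i]]_n :=
  U *m (\matrix_(i, j) ((adj U *m X *m U) i j / RC (mean f (lam 0 i) (lam 0 j))))
    *m adj U.

Definition fnorm2 {R : realType} n (f : R -> R) (U : 'M[R[i]]_n)
    (lam : 'rV[R]_n) (X : 'M[R[i]]_n) : R[i] :=
  \tr (adj X *m mf_inv f U lam X).

Definition finfo {R : realType} n (f : R -> R) (f0 : R) (rho : 'M[R[i]]_n)
    (U : 'M[R[i]]_n) (lam : 'rV[R]_n) (A : 'M[R[i]]_n) : R[i] :=
  RC (f0 / 2) * fnorm2 f U lam ('i%C *: (rho *m A - A *m rho)).

(* In an eigenbasis of rho the map m_f(L_rho,R_rho)^{-1} acts entrywise, and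
   the commutator i[rho,A] has zero diagonal and off-diagonal entries
   +-i(l1 - l2) a12.  Hence, using m_f(l2,l1) = m_f(l1,l2),
   I^f_rho(A) = f(0) (l1 - l2)^2 |a12|^2 / m_f(l1,l2).  With l2 - l1 = r and
   2 m_f(l1,l2) = m_f(1-r,1+r), the definition of f~ turns this coefficient
   into 1 - m_f~(1-r,1+r). *)

From HB Require Import structures.
From mathcomp Require Import all_boot all_order all_algebra.
From mathcomp Require Import complex.
From mathcomp Require Import all_classical all_reals all_analysis.
From mathcomp Require Import ring lra.
Set Implicit Arguments.
Unset Strict Implicit.
Unset Printing Implicit Defensive.

Import Order.TTheory GRing.Theory Num.Theory.
Import numFieldNormedType.Exports.
Local Open Scope classical_set_scope.
Local Open Scope ring_scope.

Lemma sum_ord2 (V : nmodType) (F : 'I_2 -> V) : \sum_(i < 2) F i = F 0 + F 1.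
Proof. by rewrite big_ord_recr big_ord1; congr (F _ + F _); apply: val_inj. Qed.

Section Means.
Variables (R : realType) (f : R -> R).

Lemma mean_gt0 a b : (forall t, 0 < t -> 0 < f t) -> 0 < a -> 0 < b -> 0 < mean f a b.
Proof. by move=> fpos a0 b0; rewrite /mean mulr_gt0 // fpos // divr_gt0. Qed.

Lemma mean_sym a b : (forall t, 0 < t -> t * f t^-1 = f t) ->
  0 < a -> 0 < b -> mean f b a = mean f a b.
Proof.
move=> fsym a0 b0; rewrite /mean -(fsym (a / b)) ?divr_gt0 // invf_div.
by field; rewrite gt_eqF.
Qed.

Lemma mean_div a b c : c != 0 -> mean f (a / c) (b / c) = mean f a b / c.
Proof.
move=> c0; rewrite /mean.
have -> : b / c / (a / c) = b / a by rewrite invf_div mulrA divfK.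
by rewrite mulrAC.
Qed.

Lemma mean_ftilde f0 a b : a != 0 ->
  mean (ftilde f f0) a b = (a + b) / 2 - f0 * (b - a) ^+ 2 / (2 * mean f a b).
Proof.
move=> a0; rewrite /mean /ftilde !invfM; move: (f (b / a))^-1 => fi.
by field.
Qed.

End Means.

Section ComplexMatrices.
Variable R : realType.

Lemma adj_mul m n p (A : 'M[R[i]]_(m, n)) (B : 'M[R[i]]_(n, p)) :
  adj (A *m B) = adj B *m adj A.
Proof. by rewrite /adj map_mxM trmx_mul. Qed.

Lemma adjK m n (A : 'M[R[i]]_(m, n)) : adj (adj A) = A.
Proof. by apply/matrixP=> i j; rewrite !mxE conjCK. Qed.

Lemma adjZ m n (c : R[i]) (A : 'M[R[i]]_(m, n)) :
  adj (c *: A) = Num.conj c *: adj A.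
Proof. by apply/matrixP=> i j; rewrite !mxE rmorphM. Qed.

Lemma adj_mx11 (A : 'M[R[i]]_1) : adj A 0 0 = Num.conj (A 0 0).
Proof. by rewrite !mxE. Qed.

Lemma conj_RC (t : R) : Num.conj (RC t) = RC t.
Proof. exact: conjc_real. Qed.

Lemma qubit_adj (x y z : R) : adj (qubit x y z) = qubit x y z.
Proof.
apply/matrixP=> i j; rewrite /adj /qubit /sigma1 /sigma2 /sigma3 /mx2 !mxE.
case: i => [[|[|?]] ?] //; case: j => [[|[|?]] ?] //;
rewrite /= ?mxE /= ?mulr1n ?mulr0n /RC;
by apply/eqP; rewrite eq_complex /=; apply/andP; split; apply/eqP; ring.
Qed.

Lemma adj_eigenvector n (rho : 'M[R[i]]_n) (v : 'cV[R[i]]_n) (l : R) :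
  adj rho = rho -> rho *m v = RC l *: v -> adj v *m rho = RC l *: adj v.
Proof. by move=> rhoH rhov; rewrite -rhoH -adj_mul rhov adjZ conj_RC. Qed.

Lemma entry_adj_mul_orthogonal n (A : 'M[R[i]]_n) (c : R[i]) (p q : 'cV[R[i]]_n) :
  (adj q *m p) 0 0 = 0 -> (adj q *m ((A - c%:M) *m p)) 0 0 = (adj q *m A *m p) 0 0.
Proof.
move=> qp0; rewrite mulmxBl mul_scalar_mx mulmxBr -scalemxAr mulmxA.
by rewrite [LHS]mxE [X in _ + X]mxE [X in _ - X]mxE qp0 mulr0 subr0.
Qed.

Lemma mul_conj_i : Num.conj 'i%C * 'i%C = 1 :> R[i].
Proof. by apply/eqP; rewrite eq_complex /=; apply/andP; split; apply/eqP; ring. Qed.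

Lemma mul_conjM (c w : R[i]) :
  Num.conj (c * w) * (c * w) = Num.conj c * c * (Num.conj w * w).
Proof. by rewrite rmorphM mulrACA. Qed.

Lemma entry_commutator_eigen n (rho A : 'M[R[i]]_n) (p q : 'cV[R[i]]_n) (lp lq : R) :
  adj rho = rho -> rho *m p = RC lp *: p -> rho *m q = RC lq *: q ->
  (adj p *m ('i%C *: (rho *m A - A *m rho)) *m q) 0 0 =
    'i%C * (RC (lp - lq) * (adj p *m A *m q) 0 0).
Proof.
move=> rhoH rhop rhoq; have prho := adj_eigenvector rhoH rhop.
rewrite -scalemxAr -scalemxAl mulmxBr mulmxBl !mulmxA prho -!mulmxA rhoq.
by rewrite -scalemxAl -!scalemxAr !mulmxA -scalerBl scalerA mxE /RC rmorphB mulrA.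
Qed.

Lemma mxtrace_adj_conj n (U M X : 'M[R[i]]_n) :
  \tr (adj X *m (U *m M *m adj U)) = \tr (adj (adj U *m X *m U) *m M).
Proof. by rewrite !adj_mul adjK !mulmxA mxtrace_mulC !mulmxA. Qed.

Lemma adj_mul_mul_entry m n (U : 'M[R[i]]_(m, n)) (M : 'M[R[i]]_m) i j :
  (adj U *m M *m U) i j = (adj (col i U) *m M *m col j U) 0 0.
Proof.
rewrite !mxE; apply: eq_bigr => k _; rewrite !mxE; congr (_ * _).
by apply: eq_bigr => l _; rewrite !mxE.
Qed.

Lemma mxtrace2 (M : 'M[R[i]]_2) : \tr M = M 0 0 + M 1 1.
Proof. exact: sum_ord2. Qed.

Lemma mxtrace_adj_mul_offdiag2 (Y : 'M[R[i]]_2) (c : 'I_2 -> 'I_2 -> R[i]) :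
  Y 0 0 = 0 -> Y 1 1 = 0 ->
  \tr (adj Y *m \matrix_(i, j) (Y i j / c i j)) =
    Num.conj (Y 0 1) * Y 0 1 / c 0 1 + Num.conj (Y 1 0) * Y 1 0 / c 1 0.
Proof.
move=> Y00 Y11; rewrite mxtrace2 !mxE !sum_ord2 !mxE Y00 Y11.
by rewrite rmorph0 !mul0r add0r addr0 addrC !mulrA.
Qed.

Definition basis2 (p q : 'cV[R[i]]_2) : 'M[R[i]]_2 :=
  \matrix_(i < 2, j < 2) (if (j == 0 :> nat) then p i 0 else q i 0).

Lemma col_basis2_0 p q : col 0 (basis2 p q) = p.
Proof. by apply/matrixP=> i j; rewrite !mxE ord1. Qed.

Lemma col_basis2_1 p q : col 1 (basis2 p q) = q.
Proof. by apply/matrixP=> i j; rewrite !mxE ord1. Qed.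

Lemma fnorm2_commutator_eigenbasis (f : R -> R) (rho A : 'M[R[i]]_2)
    (p q : 'cV[R[i]]_2) (l1 l2 : R) :
  adj rho = rho -> adj A = A ->
  rho *m p = RC l1 *: p -> rho *m q = RC l2 *: q ->
  mean f l2 l1 = mean f l1 l2 ->
  fnorm2 f (basis2 p q) (\row_(j < 2) (if (j == 0 :> nat) then l1 else l2))
      ('i%C *: (rho *m A - A *m rho)) =
    RC (2 * (l1 - l2) ^+ 2 / mean f l1 l2) * `|(adj q *m A *m p) 0 0| ^+ 2.
Proof.
move=> rhoH AH rhop rhoq msym.
have adj_pAq : (adj p *m A *m q) 0 0 = Num.conj ((adj q *m A *m p) 0 0).
  by rewrite -adj_mx11 !adj_mul adjK AH mulmxA.
pose Y := adj (basis2 p q) *m ('i%C *: (rho *m A - A *m rho)) *m basis2 p q.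
have Y_eigen (i j : 'I_2) v w (lv lw : R) :
    col i (basis2 p q) = v -> col j (basis2 p q) = w ->
    rho *m v = RC lv *: v -> rho *m w = RC lw *: w ->
    Y i j = 'i%C * (RC (lv - lw) * (adj v *m A *m w) 0 0).
  move=> <- <- rhov rhow.
  by rewrite /Y adj_mul_mul_entry (entry_commutator_eigen _ rhoH rhov rhow).
have lam0 : (\row_(j < 2) (if (j == 0 :> nat) then l1 else l2)) 0 0 = l1 by rewrite mxE.
have lam1 : (\row_(j < 2) (if (j == 0 :> nat) then l1 else l2)) 0 1 = l2 by rewrite mxE.
have [p0 q1] := (col_basis2_0 p q, col_basis2_1 p q).
rewrite /fnorm2 /mf_inv mxtrace_adj_conj -/Y mxtrace_adj_mul_offdiag2; first last.
- by rewrite (Y_eigen _ _ _ _ _ _ q1 q1 rhoq rhoq) subrr /RC mul0r mulr0.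
- by rewrite (Y_eigen _ _ _ _ _ _ p0 p0 rhop rhop) subrr /RC mul0r mulr0.
rewrite (Y_eigen _ _ _ _ _ _ p0 q1 rhop rhoq) (Y_eigen _ _ _ _ _ _ q1 p0 rhoq rhop).
rewrite lam0 lam1 msym adj_pAq !mul_conjM mul_conj_i !mul1r !conj_RC conjCK sqr_normc.
set S := (adj q *m A *m p) 0 0; rewrite [S^* * S]mulrC.
rewrite !(mulrAC _ (S * _)) -mulrDl; congr (_ * _).
rewrite /RC -!rmorphM -!fmorphV -!rmorphM -rmorphD; congr (_%:C)%C.
by rewrite -mulrDl; congr (_ / _); ring.
Qed.

End ComplexMatrices.

Theorem mainTheorem8 (R : realType) (x y z : R) (A : 'M[R[i]]_2)
  (f : R -> R) (f0 : R) (phi1 phi2 : 'cV[R[i]]_2) :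
  let r := Num.sqrt (x ^+ 2 + y ^+ 2 + z ^+ 2) in
  let rho := qubit x y z in
  r < 1 ->
  adj A = A ->
  Fop f ->
  f t @[t --> 0^'+] --> f0 ->
  f0 != 0 ->
  (adj phi1 *m phi1) 0 0 = 1 -> (adj phi2 *m phi2) 0 0 = 1 ->
  (adj phi1 *m phi2) 0 0 = 0 ->
  rho *m phi1 = RC ((1 - r) / 2) *: phi1 ->
  rho *m phi2 = RC ((1 + r) / 2) *: phi2 ->
  let U : 'M[R[i]]_2 :=
    \matrix_(i < 2, j < 2) (if (j == 0 :> nat) then phi1 i 0 else phi2 i 0) in
  let lam : 'rV[R]_2 :=
    \row_(j < 2) (if (j == 0 :> nat) then (1 - r) / 2 else (1 + r) / 2) in
  let A0 := A - (\tr (rho *m A))%:M in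
  let a12 := (adj phi2 *m (A0 *m phi1)) 0 0 in
  finfo f f0 rho U lam A =
    RC (1 - mean (ftilde f f0) (1 - r) (1 + r)) * `|a12| ^+ 2.
Proof.
move=> r rho r_lt1 AH [_ fpos _ fsym] _ _ _ _ orth12 rho1 rho2 U lam A0 a12.
have r_ge0 : 0 <= r by apply: sqrtr_ge0.
have [a_gt0 b_gt0] : 0 < 1 - r /\ 0 < 1 + r by split; lra.
have orth21 : (adj phi2 *m phi1) 0 0 = 0.
  by rewrite -[phi1]adjK -adj_mul adj_mx11 orth12 rmorph0.
rewrite /finfo (fnorm2_commutator_eigenbasis (qubit_adj x y z) AH rho1 rho2);
  last by rewrite mean_sym // divr_gt0.
rewrite /a12 /A0 entry_adj_mul_orthogonal // mulrA -rmorphM; congr (RC _ * _).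
have m_gt0 := mean_gt0 fpos a_gt0 b_gt0.
rewrite mean_div ?mean_ftilde ?gt_eqF //.
by field; rewrite gt_eqF.
Qed.
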